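(* For every integer $k\ge 1$, $k$ is a local minimum of the negligibility sequence $(p(m))_{m\ge 0}$ if and only if $k$ is a local minimum of the rank sequence $(r(m))_{m\ge0}$.
   Context: Every integer $m\ge 0$ is written in binary as $m=\sum_{k\ge1} m_k 2^{k-1}$ with $m_k\in\{0,1\}$. The rank is $r(m)=\sum_k m_k$ and the negligibility is $p(m)=\sum_k (k+1)m_k$. For a real sequence $(a_m)_{m\ge0}$, an index $k\ge1$ is a local minimum if $a_{k-1}>a_k<a_{k+1}$ (strict inequalities). *)

From mathcomp Require Import all_boot.
Set Implicit Arguments. Unset Strict Implicit. Unset Printing Implicit Defensive.

(* k-th binary digit of m, 1-indexed: m = \sum_{k>=1} m_k 2^(k-1). *)
Definition digit (m k : nat) : nat := odd (m %/ 2 ^ k.-1).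

(* All digits m_k with k > m vanish since m < 2^m, so the sums over k >= 1
   are the finite sums over 1 <= k <= m. *)
Definition rank (m : nat) : nat := \sum_(1 <= k < m.+1) digit m k.
Definition negl (m : nat) : nat := \sum_(1 <= k < m.+1) k.+1 * digit m k.

Definition local_min (a : nat -> nat) (k : nat) : Prop :=
  1 <= k /\ a k.-1 > a k /\ a k < a k.+1.

From mathcomp Require Import all_boot.
From mathcomp Require Import zify.

(* Both the rank r and the negligibility p are weighted sums of binary digits,
   so splitting off the lowest digit gives the recurrences
     r(2n+b) = r(n) + b,        p(2n+b) = p(n) + r(n) + 2b.
   Iterating them twice computes r and p on each residue class modulo 4 in
   terms of r(q), p(q) (lemmas [rank_mod4], [negl_mod4]).  A strong induction
   along the same recurrences bounds the increments r(m+1) <= r(m) + 1 and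
   p(m+1) + c r(m+1) <= p(m) + c r(m) + c + 2.  With these, a case analysis on
   k mod 4 shows that k >= 1 is a local minimum of r exactly when 4 divides k,
   and likewise for p; the theorem follows by comparing both
   characterizations. *)

Definition digit_sum (w : nat -> nat) (m N : nat) : nat :=
  \sum_(1 <= k < N.+1) w k * digit m k.

(* Since m < 2^m, every digit of m beyond position m is zero. *)
Lemma digit_small m k : m < k -> digit m k = 0.
Proof.
move=> lt_mk; rewrite /digit divn_small //.
apply: (leq_trans (ltn_expl m (isT : 1 < 2))); rewrite leq_exp2l //; lia.
Qed.

Lemma digit_sum_bound w m N : m <= N -> digit_sum w m N = digit_sum w m m.
Proof.
move=> le_mN; rewrite /digit_sum (@big_cat_nat _ _ _ m.+1) //=; try lia.
rewrite [X in _ + X]big_nat_cond [X in _ + X]big1 ?addn0 //.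
by move=> k /andP[/andP[lt_mk _] _]; rewrite digit_small ?muln0.
Qed.

Lemma digit_double_low n (b : bool) : digit (n.*2 + b) 1 = b.
Proof. by rewrite /digit expn0 divn1 oddD odd_double; case: b. Qed.

Lemma digit_double_high n (b : bool) k : digit (n.*2 + b) k.+2 = digit n k.+1.
Proof.
have half : (n.*2 + b) %/ 2 = n.
  by rewrite -muln2 divnMDl // divn_small ?addn0 //; case: b.
by rewrite /digit /= expnS divnMA half.
Qed.

Lemma digit_sum_double w n (b : bool) N :
  digit_sum w (n.*2 + b) N.+1 = w 1 * b + digit_sum (fun k => w k.+1) n N.
Proof.
rewrite /digit_sum big_nat_recl // digit_double_low; congr (_ + _).
apply: eq_big_nat => -[//|k] _.
by rewrite digit_double_high.
Qed.

Lemma digit_sum_rec w n (b : bool) :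
  digit_sum w (n.*2 + b) (n.*2 + b) =
  w 1 * b + digit_sum (fun k => w k.+1) n n.
Proof.
rewrite -(@digit_sum_bound _ _ (n.*2 + b).+1) // digit_sum_double.
by rewrite digit_sum_bound //; case: b; lia.
Qed.

(* The binary recurrences for r and p; [negl m] is by definition the digit
   sum with weight k + 1, and shifting that weight adds one copy of r. *)
Lemma rank_rec n (b : bool) : rank (n.*2 + b) = rank n + b.
Proof.
have rank_ds m : rank m = digit_sum (fun=> 1) m m.
  by apply: eq_bigr => k _; rewrite mul1n.
by rewrite !rank_ds digit_sum_rec mul1n addnC.
Qed.

Lemma negl_rec n (b : bool) : negl (n.*2 + b) = negl n + rank n + 2 * b.
Proof.
rewrite [LHS]digit_sum_rec addnC; congr (_ + _).
by rewrite -big_split; apply: eq_bigr => k _; rewrite mulSn addnC.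
Qed.

Lemma rank_double n : rank n.*2 = rank n.
Proof. by have := rank_rec n false; rewrite !addn0. Qed.

Lemma rank_doubleS n : rank n.*2.+1 = (rank n).+1.
Proof. by have := rank_rec n true; rewrite !addn1. Qed.

Lemma negl_double n : negl n.*2 = negl n + rank n.
Proof. by have := negl_rec n false; rewrite !addn0. Qed.

Lemma negl_doubleS n : negl n.*2.+1 = negl n + rank n + 2.
Proof. by have := negl_rec n true; rewrite addn1. Qed.

Lemma double_cases m : exists n, m = n.*2 \/ m = n.*2.+1.
Proof.
exists m./2; rewrite -{1 3}(odd_double_half m).
by case: (odd m); [right | left].
Qed.

Lemma rank_succ_le m : rank m.+1 <= (rank m).+1.
Proof.
elim/ltn_ind: m => m IH; have [n [|] Em] := double_cases m; subst m.
  by rewrite rank_doubleS rank_double.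
rewrite -doubleS rank_double rank_doubleS.
by apply/leqW/IH; rewrite -muln2; lia.
Qed.

(* The analogous bound for p; the extra weight c makes the induction go
   through, since the odd-to-even step turns c into c + 1. *)
Lemma negl_succ_le m c :
  negl m.+1 + c * rank m.+1 <= negl m + c * rank m + c + 2.
Proof.
elim/ltn_ind: m c => m IH c; have [n [|] Em] := double_cases m; subst m.
  by rewrite rank_doubleS rank_double negl_doubleS negl_double; lia.
rewrite -doubleS rank_double rank_doubleS negl_double negl_doubleS.
by have := IH n ltac:(rewrite -muln2; lia) c.+1; lia.
Qed.

Lemma mod4_cases k :
  exists q, [\/ k = 4 * q, k = (4 * q).+1, k = (4 * q).+2 | k = (4 * q).+3].
Proof.
exists (k %/ 4); move: (divn_eq k 4) (ltn_pmod k (isT : 0 < 4)).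
case: (k %% 4) => [|[|[|[|j]]]] Ek //= _;
  [constructor 1 | constructor 2 | constructor 3 | constructor 4]; lia.
Qed.

Lemma quad_double q : 4 * q = q.*2.*2.
Proof. by rewrite -!muln2 -mulnA mulnC. Qed.

Lemma rank_mod4 q :
  [/\ rank (4 * q) = rank q, rank (4 * q).+1 = (rank q).+1,
      rank (4 * q).+2 = (rank q).+1 & rank (4 * q).+3 = (rank q).+2].
Proof.
rewrite quad_double -doubleS.
by rewrite !rank_doubleS !rank_double rank_doubleS.
Qed.

Lemma negl_mod4 q :
  [/\ negl (4 * q) = negl q + 2 * rank q,
      negl (4 * q).+1 = negl q + 2 * rank q + 2,
      negl (4 * q).+2 = negl q + 2 * rank q + 3
    & negl (4 * q).+3 = negl q + 2 * rank q + 5].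
Proof.
rewrite quad_double -doubleS.
rewrite !negl_doubleS !negl_double negl_doubleS rank_doubleS rank_double.
by split; lia.
Qed.

(* Local minima of r are the positive multiples of 4: for k = 4q the left
   neighbour 4(q-1)+3 has rank r(q-1)+2 > r(q), while at other residues one of
   the two strict inequalities fails outright. *)
Lemma rank_local_min k : 1 <= k -> local_min rank k <-> 4 %| k.
Proof.
rewrite /local_min; have [q [->|->|->|->]] := mod4_cases k => /=.
- case: q => [//|q] _.
  have -> : (4 * q.+1).-1 = (4 * q).+3 by lia.
  have [r0 r1 _ _] := rank_mod4 q.+1; have [_ _ _ r3] := rank_mod4 q.
  rewrite r0 r1 r3; have := rank_succ_le q; lia.
- by have [r0 r1 r2 _] := rank_mod4 q; rewrite r0 r1 r2; lia.
- by have [_ r1 r2 r3] := rank_mod4 q; rewrite r1 r2 r3; lia.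
- have -> : (4 * q).+4 = 4 * q.+1 by lia.
  have [r0 _ _ _] := rank_mod4 q.+1; have [_ _ r2 r3] := rank_mod4 q.
  rewrite r0 r2 r3; have := rank_succ_le q; lia.
Qed.

(* The same characterization for p, with [negl_succ_le] (weight 2) playing the
   role of [rank_succ_le] at the left neighbour of k = 4q. *)
Lemma negl_local_min k : 1 <= k -> local_min negl k <-> 4 %| k.
Proof.
rewrite /local_min; have [q [->|->|->|->]] := mod4_cases k => /=.
- case: q => [//|q] _.
  have -> : (4 * q.+1).-1 = (4 * q).+3 by lia.
  have [p0 p1 _ _] := negl_mod4 q.+1; have [_ _ _ p3] := negl_mod4 q.
  rewrite p0 p1 p3; have := negl_succ_le q 2; lia.
- by have [p0 p1 p2 _] := negl_mod4 q; rewrite p0 p1 p2; lia.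
- by have [_ p1 p2 p3] := negl_mod4 q; rewrite p1 p2 p3; lia.
- have -> : (4 * q).+4 = 4 * q.+1 by lia.
  have [p0 _ _ _] := negl_mod4 q.+1; have [_ _ p2 p3] := negl_mod4 q.
  by rewrite p0 p2 p3; lia.
Qed.

Theorem theorem2 (k : nat) : 1 <= k ->
  (local_min negl k <-> local_min rank k).
Proof. by move=> k_gt0; rewrite negl_local_min // rank_local_min. Qed.
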